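(* Let $b\ge 2$ be even and $n\ge 2$. Then $$g(SC^{+}(b,n)) = b + \frac{b^{2n}(b-1) + b^{n}(bn-n-1)}{2}.$$
   Context: For an even integer $b\ge2$ and $n\ge0$, $SC^{+}(b,n)=\langle\{b^{n+i}+1: i\in\mathbb{N}\}\rangle$ (submonoid of $(\mathbb{N},+)$ generated by these numbers, a numerical semigroup). The genus $g(S)$ is the cardinality of $\mathbb{N}\setminus S$. *)

From mathcomp Require Import all_boot.
Set Implicit Arguments. Unset Strict Implicit. Unset Printing Implicit Defensive.

(* Membership in SC^+(b,n) = < { b^(n+i) + 1 : i in N } >, the submonoid of
   (N,+) generated by these numbers: x is a finite sum (possibly empty) of
   generators, the list l recording the indices i used (with repetition). *)
Definition inSCplus (b n x : nat) : Prop :=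
  exists l : seq nat, x = \sum_(i <- l) (b ^ (n + i) + 1).

Definition genus_SCplus (b n g : nat) : Prop :=
  exists s : seq nat, [/\ uniq s, (forall x, x \in s <-> ~ inSCplus b n x) & size s = g].

From mathcomp Require Import all_boot zify.

(* An element of SC^+(b,n) is a sum of k generators b^(n+i) + 1, i.e. b^n N + k
   with N a sum of k powers of b. The possible k for a given N are exactly
   N - (b-1) t with t <= L(N) := \sum_(j >= 1) N %/ b^j, the extreme case being
   the base-b digits of N. Hence x lies in the semigroup iff
   x + (b-1) t = (b^n+1) N for some N and t <= L(N). For even b, b-1 is prime to
   b^n+1, so every x is (b^n+1) N - (b-1) i for a unique i <= b^n, and x is a
   gap iff L(N) < i, which forces N < b (b^n+1). The genus is the number of such
   pairs (N, i), evaluated by cutting [0, b^(n+1)) into base-b blocks on which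
   L is additive. *)

Lemma sum_ltn_minn R K : \sum_(0 <= k < R) (k < K) = minn R K.
Proof.
elim: R => [|R IH]; first by rewrite big_geq // min0n.
by rewrite big_nat_recr //= IH; case: ltnP; lia.
Qed.

Lemma sum_nat_blocks (F : nat -> nat) k c :
  \sum_(0 <= N < k * c) F N = \sum_(0 <= a < k) \sum_(0 <= r < c) F (a * c + r).
Proof.
rewrite big_nat_mul; apply: eq_bigr => a _.
rewrite mulSn addnC -{1}(add0n (a * c)) big_addn addKn.
by apply: eq_bigr => r _; rewrite addnC.
Qed.

Lemma double_sum_iota k : 2 * \sum_(0 <= a < k) a + k = k * k.
Proof.
elim: k => [|k IH]; first by rewrite big_geq.
by rewrite big_nat_recr //= mulnDr; nia.
Qed.

(* Legendre's sum [\sum_(k >= 1) N %/ b ^ k]; the terms with [k >= N] vanish. *)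
Definition legendre b N := \sum_(0 <= k < N) N %/ b ^ k.+1.

Definition powsum b (l : seq nat) := \sum_(e <- l) b ^ e.

Section Legendre.

Context {b : nat} (b_gt1 : 1 < b).

Let b_gt0 : 0 < b := ltnW b_gt1.

Lemma legendre_widen {R N : nat} :
  N <= R -> \sum_(0 <= k < R) N %/ b ^ k.+1 = legendre b N.
Proof.
move=> le_NR; rewrite /legendre (@big_cat_nat _ _ _ N 0 R) //=.
rewrite [X in _ + X]big_nat_cond [X in _ + X]big1 ?addn0 // => k.
rewrite andbT => /andP[le_Nk _]; apply: divn_small.
by apply: leq_trans (ltn_expl k.+1 b_gt1); lia.
Qed.

Lemma legendre_small {N : nat} : N < b -> legendre b N = 0.
Proof.
move=> lt_Nb; rewrite /legendre big_nat_cond big1 // => k _.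
apply: divn_small; apply: (leq_trans lt_Nb); rewrite -{1}(expn1 b).
exact: leq_pexp2l.
Qed.

Lemma legendre_div N : legendre b N = N %/ b + legendre b (N %/ b).
Proof.
rewrite -(legendre_widen (leqnSn N)) -(legendre_widen (leq_div N b)).
rewrite big_nat_recl //= expn1; congr (_ + _).
by apply: eq_bigr => k _; rewrite expnS divnMA.
Qed.

Lemma leq_div_legendre N : N %/ b <= legendre b N.
Proof. by rewrite legendre_div leq_addr. Qed.

Lemma legendre_superadditive a c : legendre b a + legendre b c <= legendre b (a + c).
Proof.
rewrite -(legendre_widen (leq_addr c a)) -(legendre_widen (leq_addl a c)).
rewrite -big_split /=; apply: leq_sum => k _.
by rewrite divnD ?expn_gt0 ?b_gt0 // leq_addr.
Qed.

(* Adding two numbers below [b ^ K.+1] produces at most one carry per digit. *)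
Lemma legendre_subadditive {a c K : nat} :
  a + c < b ^ K.+1 -> legendre b (a + c) <= legendre b a + legendre b c + K.
Proof.
move=> lt_ac.
rewrite -(legendre_widen (leq_addr c a)) -(legendre_widen (leq_addl a c)).
rewrite -big_split /=; apply: leq_trans (leq_add (leqnn _) (geq_minr (a + c) K)).
rewrite -sum_ltn_minn -big_split /=.
apply: leq_sum => k _; case: (ltnP k K) => [_ | le_Kk].
  by rewrite divnD ?expn_gt0 ?b_gt0 // leq_add2l leq_b1.
rewrite divn_small //; apply: leq_trans lt_ac _.
by apply: leq_pexp2l; rewrite // ltnS.
Qed.

Lemma leq_legendre {a c : nat} : a <= c -> legendre b a <= legendre b c.
Proof.
move=> le_ac; rewrite -(subnKC le_ac).
exact: leq_trans (leq_addr _ _) (legendre_superadditive _ _).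
Qed.

Lemma legendre_expn e : b.-1 * legendre b (b ^ e) + 1 = b ^ e.
Proof.
elim: e => [|e IH]; first by rewrite expn0 legendre_small // muln0.
rewrite legendre_div expnS mulKn // mulnDr -addnA IH.
by rewrite addnC -mulSn prednK.
Qed.

(* Prepending a leading digit [a] causes no carry. *)
Lemma legendre_blockD a M e : a < b -> M < b ^ e ->
  legendre b (a * b ^ e + M) = a * legendre b (b ^ e) + legendre b M.
Proof.
move=> lt_ab; elim: e M => [|e IH] M lt_M.
  move: lt_M; rewrite expn0 ltnS leqn0 => /eqP ->.
  by rewrite addn0 muln1 !legendre_small ?muln0.
have lt_Mb : M %/ b < b ^ e by rewrite ltn_divLR // -expnSr.
rewrite legendre_div (legendre_div (b ^ e.+1)) (legendre_div M).
rewrite expnS mulnCA mulnC -[X in X * b + M]mulnC divnMDl //.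
by rewrite (mulnC b) mulnK // [b ^ e * a]mulnC IH //; lia.
Qed.

Lemma sum_legendre_expn e : 2 * b.-1 * \sum_(0 <= M < b ^ e) legendre b M
  + e * b.-1 * b ^ e + b ^ e = b ^ e * b ^ e.
Proof.
elim: e => [|e IH]; first by rewrite expn0 big_nat1 legendre_small ?muln0.
have block_sum a : \sum_(0 <= r < b) legendre b (a * b + r) = b * (a + legendre b a).
  rewrite (@eq_big_nat _ _ _ 0 b _ (fun _ => a + legendre b a)).
    by rewrite sum_nat_const_nat subn0.
  move=> r /andP[_ lt_rb].
  by rewrite legendre_div divnMDl // divn_small // addn0.
rewrite expnSr sum_nat_blocks (eq_bigr _ (fun a _ => block_sum a)) -big_distrr.
rewrite big_split /=.
have := double_sum_iota (b ^ e); move: IH.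
move: (\sum_(0 <= a < b ^ e) a) (\sum_(0 <= a < b ^ e) legendre b a) (b ^ e).
rewrite -(prednK b_gt0) => S A B; move: b.-1 => d; nia.
Qed.

Lemma powsum_cons e l : powsum b (e :: l) = b ^ e + powsum b l.
Proof. by rewrite /powsum big_cons. Qed.

Lemma powsum_legendre l :
  exists2 t, t <= legendre b (powsum b l) & powsum b l = size l + b.-1 * t.
Proof.
elim: l => [|e l [t le_t IH]]; first by exists 0 => //; rewrite /powsum big_nil muln0.
exists (legendre b (b ^ e) + t).
  rewrite powsum_cons; apply: leq_trans (legendre_superadditive _ _).
  by rewrite leq_add2l.
by rewrite powsum_cons IH /= mulnDr; have := legendre_expn e; lia.
Qed.

(* The base-b digits of N, each digit [a] at position [k] contributing [a]
   copies of [k]. *)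
Lemma powsum_digits N :
  exists l, powsum b l = N /\ size l + b.-1 * legendre b N = N.
Proof.
have [K] := ubnP N; elim: K N => // K IH N lt_NK.
case: (posnP N) => [->|N_gt0].
  by exists [::]; rewrite /powsum big_nil /legendre big_geq // muln0.
have lt_NbK : N %/ b < K.
  by rewrite -ltnS; apply: leq_trans lt_NK; rewrite ltnS ltn_Pdiv.
have [l [sum_l size_l]] := IH (N %/ b) lt_NbK.
exists (nseq (N %% b) 0 ++ map S l); split.
  rewrite /powsum big_cat big_nseq big_map iter_addn_0 expn0 mul1n.
  under eq_bigr do rewrite expnS.
  rewrite -big_distrr -/(powsum b l) sum_l.
  by change (N %% b + b * (N %/ b) = N); rewrite addnC mulnC -divn_eq.
rewrite size_cat size_nseq size_map legendre_div mulnDr.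
have := divn_eq N b; have : N %/ b * b = b.-1 * (N %/ b) + N %/ b.
  by rewrite [b.-1 * _]mulnC -mulnSr prednK.
lia.
Qed.

Lemma leq_mul_legendre N : b.-1 * legendre b N <= N.
Proof. by have [l [_ size_l]] := powsum_digits N; rewrite -{2}size_l leq_addl. Qed.

(* Splitting one power [b ^ e.+1] into [b] copies of [b ^ e] adds [b.-1] terms. *)
Lemma powsum_split l : size l < powsum b l ->
  exists l', powsum b l' = powsum b l /\ size l' = size l + b.-1.
Proof.
move=> lt_size.
have [/hasP[e l_e e_gt0] | /hasPn all0] := boolP (has (fun e => 0 < e) l); last first.
  move: lt_size; rewrite /powsum big_seq (eq_bigr (fun _ => 1)).
    by rewrite -big_seq sum1_size ltnn.
  by move=> e /all0; rewrite lt0n negbK => /eqP ->.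
exists (nseq b e.-1 ++ rem e l); split.
  rewrite /powsum big_cat big_nseq iter_addn_0 (perm_big _ (perm_to_rem l_e)) big_cons.
  by rewrite -/(powsum b (rem e l)) mulnC -expnS prednK.
have : 0 < size l by case: l l_e {lt_size}.
rewrite size_cat size_nseq size_rem // -!subn1 => size_gt0.
by rewrite addnBA // addnBA // addnC.
Qed.

Lemma powsum_of_size {N t : nat} : t <= legendre b N ->
  exists l, powsum b l = N /\ size l + b.-1 * t = N.
Proof.
move=> le_t; have [r def_r] : exists r, legendre b N = t + r.
  by exists (legendre b N - t); rewrite subnKC.
elim: r t def_r {le_t} => [|r IH] t def_r.
  by rewrite addn0 in def_r; rewrite -def_r; exact: powsum_digits.
have [l [sum_l size_l]] := IH t.+1 (etrans def_r (addnS t r)).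
have pred_b_gt0 : 0 < b.-1 by rewrite -ltnS prednK.
have [|l' [sum_l' size_l']] := powsum_split l.
  by rewrite sum_l -size_l mulnS; lia.
exists l'; split; first by rewrite sum_l' sum_l.
by rewrite size_l' -size_l mulnS; lia.
Qed.

End Legendre.

Lemma eq_mod_mul_coprime m d a c : coprime m d -> a < m -> c < m ->
  d * a = d * c %[mod m] -> a = c.
Proof.
move=> co_md; wlog le_ac : a c / a <= c.
  move=> H lt_a lt_c e; case: (leqP a c) => [le_ac | /ltnW le_ca]; first exact: H.
  exact/esym/H.
move=> _ lt_c /eqP e.
have : m %| d * (c - a) by rewrite mulnBr -eqn_mod_dvd ?leq_mul2l ?le_ac ?orbT // eq_sym.
rewrite Gauss_dvdr //; case: (posnP (c - a)) => [|ca_gt0 /(dvdn_leq ca_gt0)]; lia.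
Qed.

(* Since b = 1 mod b.-1, we get b ^ n + 1 = 2 mod b.-1, and b.-1 is odd. *)
Lemma coprime_pred_expS b n : 0 < b -> ~~ odd b -> coprime b.-1 (b ^ n).+1.
Proof.
move=> b_gt0 b_even.
have b_mod : b %% b.-1 = 1 %% b.-1 by rewrite -{1}(prednK b_gt0) -addn1 modnDl.
rewrite -coprime_modr -addn1 -modnDml -modnXm b_mod modnXm exp1n modnDml addn1.
rewrite coprime_modr coprimen2.
by move: b_even; rewrite -{1}(prednK b_gt0) /=; case: (odd _).
Qed.

Lemma count_allpairs (S T : Type) (P : pred (S * T)) (s : seq S) (t : seq T) :
  count P [seq (x, y) | x <- s, y <- t] = \sum_(x <- s) count (fun y => P (x, y)) t.
Proof.
elim: s => [|x s IH]; first by rewrite big_nil.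
by rewrite allpairs_cons count_cat IH big_cons count_map.
Qed.

Lemma count_iota_itv u v k :
  count (fun i => (u < i) && (i <= v)) (iota 0 k.+1) = minn v k - u.
Proof.
elim: k => [|k IH]; first by rewrite /= addn0; case: ltnP; case: ltnP; lia.
rewrite -[k.+2]addn1 iotaD count_cat IH /= addn0 add0n.
by case: (ltnP u k.+1); case: (leqP k.+1 v); lia.
Qed.

Lemma sum_double_div_odd k : odd k -> \sum_(0 <= N < k) N.*2 %/ k = k./2.
Proof.
move=> k_odd; have def_k : k = k./2.*2.+1 by rewrite -[k in LHS]odd_double_half k_odd.
rewrite def_k; set e := k./2; rewrite -[e in RHS]addn0.
rewrite (@big_cat_nat _ _ _ e.+1) //= ?ltnS ?leq_double ?leq_addr //; last by lia.
rewrite big_nat_cond big1 ?add0n => [|N /andP[/andP[_ lt_N] _]]; last first.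
  by apply: divn_small; lia.
rewrite (@eq_big_nat _ _ _ e.+1 e.*2.+1 _ (fun _ => 1)) => [|N /andP[lt_N le_N]].
  by rewrite sum_nat_const_nat muln1 addn0; lia.
apply/eqP; rewrite eqn_leq leq_divRL // mul1n -ltnS ltn_divLR //.
by apply/andP; split; lia.
Qed.

Section GapsOfSCplus.

Variables b n : nat.
Hypotheses (b_gt1 : 1 < b) (b_even : ~~ odd b) (n_gt0 : 0 < n).

Local Notation d := b.-1.
Local Notation B := (b ^ n).
Local Notation m := (b ^ n).+1.

Let b_gt0 : 0 < b := ltnW b_gt1.

Let d_gt0 : 0 < d.
Proof. by rewrite -ltnS prednK. Qed.

Let d_odd : odd d.
Proof. by move: b_even; rewrite -(prednK b_gt0) /= negbK. Qed.

Let coprime_md : coprime m d.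
Proof. by rewrite coprime_sym coprime_pred_expS. Qed.

Lemma sum_generators l :
  \sum_(i <- l) (b ^ (n + i) + 1) = B * powsum b l + size l.
Proof.
rewrite big_split /= sum1_size big_distrr /=; congr (_ + _).
by apply: eq_bigr => i _; rewrite expnD.
Qed.

Lemma inSCplusP x :
  inSCplus b n x <-> exists N t, t <= legendre b N /\ x + d * t = m * N.
Proof.
split=> [[l ->] | [N [t [le_t def_x]]]].
  have [t le_t sum_l] := powsum_legendre b_gt1 l.
  by exists (powsum b l), t; rewrite sum_generators mulSn {3}sum_l; split => //; lia.
have [l [sum_l size_l]] := powsum_of_size b_gt1 le_t.
by exists l; rewrite sum_generators sum_l; move: def_x; rewrite mulSn -{2}size_l; lia.
Qed.

(* [legendre b (d * j) <= j], and the addition creates at most [n + j] carries. *)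
Lemma legendre_shift N j : N < b * m ->
  legendre b (N + d * j) <= legendre b N + j * m.
Proof.
move=> lt_N; case: (posnP j) => [->|j_gt0]; first by rewrite muln0 addn0 leq_addr.
have le_legendre_dj : legendre b (d * j) <= j.
  by rewrite -(leq_pmul2l d_gt0) (leq_mul_legendre b_gt1).
have lt_Ndj : N + d * j < b ^ (n + j).+1.
  have lt_j : j < b ^ j := ltn_expl j b_gt1.
  have le_bb : b * b <= b ^ n.+1 by rewrite mulnn leq_pexp2l.
  have : b ^ n.+1 * j.+1 <= b ^ n.+1 * b ^ j by rewrite leq_mul2l lt_j orbT.
  have : b * b * j <= b ^ n.+1 * j by rewrite leq_mul2r le_bb orbT.
  move: lt_N; rewrite -[(n + j).+1]addSn expnD mulnS expnS -!subn1; nia.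
have lt_n : n < B := ltn_expl n b_gt1.
have : j * n.+1 <= j * B by rewrite leq_mul2l lt_n orbT.
have := legendre_subadditive b_gt1 lt_Ndj; nia.
Qed.

Lemma gapP x : ~ inSCplus b n x <-> exists N i,
  [/\ N < b * m, i < m, legendre b N < i, d * i <= m * N & x = m * N - d * i].
Proof.
rewrite inSCplusP; split=> [not_in | [N [i [lt_N lt_i lt_legendre le_di ->]]]].
  have [a _] := Bezoutl d (ltn0Sn B); rewrite (eqP coprime_md) => dvd_a.
  pose i := (x * a) %% m; pose N := (x + d * i) %/ m.
  have dvd_i : m %| x + d * i.
    rewrite /dvdn -modnDmr modnMmr modnDmr -/(dvdn m _).
    have -> : x + d * (x * a) = x * (1 + a * d).
      by rewrite mulnDr muln1 [a * d]mulnC mulnCA.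
    exact: dvdn_mull.
  have def_N : m * N = x + d * i by rewrite mulnC divnK.
  have lt_i : i < m by rewrite ltn_mod.
  have lt_legendre : legendre b N < i.
    by rewrite ltnNge; apply/negP => le_i; apply: not_in; exists N, i.
  exists N, i; split => //; rewrite ?def_N ?leq_addl ?addnK //.
  have : N %/ b < m.
    exact: leq_ltn_trans (leq_div_legendre b_gt1 N) (ltn_trans lt_legendre lt_i).
  by rewrite ltn_divLR // mulnC.
case=> N' [t [le_t def_x]].
have e : m * N + d * t = m * N' + d * i by rewrite -def_x; lia.
have t_mod : t %% m = i.
  apply: eq_mod_mul_coprime coprime_md (ltn_mod _ _) lt_i _.
  rewrite modnMmr; have := congr1 (modn^~ m) e.
  by rewrite [m * N]mulnC [m * N']mulnC !modnMDl.
set q := t %/ m; have def_t : t = q * m + i by rewrite -t_mod -divn_eq.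
have def_N' : N' = N + d * q.
  apply/eqP; rewrite -(eqn_pmul2l (ltn0Sn B)) mulnDr; apply/eqP.
  by move: e; rewrite def_t mulnDr addnA => /addIn <-; rewrite [q * m]mulnC mulnCA.
have := legendre_shift N q lt_N; rewrite -def_N'; lia.
Qed.

Definition gap_pairs :=
  [seq p <- [seq (N, i) | N <- iota 0 (b * m), i <- iota 0 m]
     | (legendre b p.1 < p.2) && (d * p.2 <= m * p.1)].

Definition gaps := [seq m * p.1 - d * p.2 | p <- gap_pairs].

Lemma uniq_gaps : uniq gaps.
Proof.
rewrite map_inj_in_uniq.
  by rewrite filter_uniq // allpairs_uniq ?iota_uniq // => -[? ?] [? ?].
move=> [N i] [N' i']; rewrite !mem_filter.
move=> /andP[/andP[_ le_di] L_Ni] /andP[/andP[_ le_di'] L_Ni'] /= e.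
case/allpairsP: L_Ni => -[x y] [_ /[!mem_iota] /= lt_i [eN ei]]; subst x y.
case/allpairsP: L_Ni' => -[x y] [_ /[!mem_iota] /= lt_i' [eN ei]]; subst x y.
move: le_di le_di' lt_i lt_i' => /= le_di le_di' lt_i lt_i'.
have e' : m * N + d * i' = m * N' + d * i by lia.
have eq_i : i' = i.
  apply: eq_mod_mul_coprime coprime_md _ _ _; [lia | lia |].
  have := congr1 (modn^~ m) e'.
  by rewrite [m * N]mulnC [m * N']mulnC !modnMDl.
by move: e'; rewrite eq_i => /addIn /eqP; rewrite eqn_pmul2l // => /eqP ->.
Qed.

Lemma mem_gaps x : x \in gaps <-> ~ inSCplus b n x.
Proof.
rewrite gapP; split.
  case/mapP => -[N i]; rewrite mem_filter => /andP[/andP[lt_legendre le_di] L_Ni] ->.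
  case/allpairsP: L_Ni => -[N1 i1] [/[!mem_iota] /= lt_N lt_i [eN ei]]; subst N1 i1.
  by exists N, i; split.
case=> N [i [lt_N lt_i lt_legendre le_di ->]]; apply/mapP; exists (N, i) => //.
rewrite mem_filter; apply/andP; split; first by rewrite /= lt_legendre le_di.
by apply: (allpairs_f (fun a c => (a, c))); rewrite mem_iota.
Qed.

Lemma size_gaps :
  size gaps = \sum_(0 <= N < b * m) (minn (m * N %/ d) B - legendre b N).
Proof.
rewrite size_map size_filter count_allpairs /index_iota subn0; apply: eq_bigr => N _.
rewrite -count_iota_itv; apply: eq_count => i /=.
by rewrite leq_divRL // mulnC.
Qed.

Local Notation q := (legendre b B).
Local Notation A := (\sum_(0 <= M < B) legendre b M).

Let def_B : d * q + 1 = B := legendre_expn b_gt1 n.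

Let def_m : m = q * d + 2.
Proof. by rewrite -(addn1 B) -{1}def_B mulnC -addnA. Qed.

Let b_le_B : b <= B.
Proof. by rewrite -{1}(expn1 b) leq_pexp2l. Qed.

Lemma sum_gaps_head :
  \sum_(0 <= N < d) (minn (m * N %/ d) B - legendre b N)
    = q * \sum_(0 <= N < d) N + d./2.
Proof.
rewrite -(sum_double_div_odd _ d_odd) big_distrr -big_split /=.
apply: eq_big_nat => N /andP[_ lt_N].
rewrite (legendre_small b_gt1) ?subn0; last by apply: leq_trans lt_N _; rewrite leq_pred.
have -> : m * N = q * N * d + N.*2 by rewrite def_m -addnn; nia.
rewrite divnMDl //; apply/minn_idPl.
have : N.*2 %/ d < 2 by rewrite ltn_divLR // -muln2 mulnC ltn_mul2l.
have := def_B; nia.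
Qed.

Lemma sum_gaps_tail :
  \sum_(d <= N < b * m) (minn (m * N %/ d) B - legendre b N) + d * B
    = \sum_(0 <= N < b * B) (B - legendre b N).
Proof.
have vanish : \sum_(b * B <= N < b * m) (B - legendre b N) = 0.
  rewrite big_nat_cond big1 // => N /andP[/andP[le_N _] _]; apply/eqP.
  rewrite subn_eq0; apply: leq_trans (leq_legendre b_gt1 le_N).
  by apply: leq_trans (leq_div_legendre b_gt1 _); rewrite mulKn.
have -> : \sum_(0 <= N < b * B) (B - legendre b N)
         = \sum_(0 <= N < b * m) (B - legendre b N).
  by rewrite [RHS](@big_cat_nat _ _ _ (b * B)) ?leq_mul2l ?leqnSn ?orbT //= vanish addn0.
rewrite (@big_cat_nat _ _ _ d 0 (b * m)) //=; last first.
  by apply: leq_trans (leq_pred b) (leq_pmulr _ _).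
rewrite [LHS]addnC; congr (_ + _).
  rewrite -{1}(subn0 d) -sum_nat_const_nat; apply: eq_big_nat => N /andP[_ lt_N].
  by rewrite (legendre_small b_gt1) ?subn0 // (leq_trans lt_N) ?leq_pred.
apply: eq_big_nat => N /andP[le_N _]; congr (_ - _); apply/minn_idPr.
by rewrite leq_divRL // leq_mul.
Qed.

Lemma sum_low_block a : a < d ->
  \sum_(0 <= M < B) (B - (a * q + legendre b M)) + (a * q * B + A) = B * B.
Proof.
move=> lt_a.
have -> : a * q * B = \sum_(0 <= M < B) a * q by rewrite sum_nat_const_nat subn0 mulnC.
have -> : B * B = \sum_(0 <= M < B) B by rewrite sum_nat_const_nat subn0.
rewrite addnA -!big_split /=; apply: eq_big_nat => M /andP[_ lt_M].
rewrite -addnA subnK //; have := leq_legendre b_gt1 (ltnW lt_M).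
have := leq_mul lt_a (leqnn q); rewrite mulSn; have := def_B; lia.
Qed.

Lemma sum_top_block : \sum_(0 <= M < B) (B - (d * q + legendre b M)) = b.
Proof.
rewrite (@big_cat_nat _ _ _ b) //=.
rewrite [X in _ + X]big_nat_cond [X in _ + X]big1 ?addn0 => [|M /andP[/andP[le_bM _] _]].
  rewrite -[RHS]muln1 -[b in RHS]subn0 -sum_nat_const_nat.
  apply: eq_big_nat => M /andP[_ lt_M].
  by rewrite (legendre_small b_gt1 lt_M); have := def_B; lia.
have : 0 < legendre b M.
  by apply: leq_trans (leq_div_legendre b_gt1 M); rewrite divn_gt0.
have := def_B; lia.
Qed.

Lemma sum_sub_legendre :
  \sum_(0 <= N < b * B) (B - legendre b N) + (q * B * \sum_(0 <= a < d) a + d * A)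
    = d * B * B + b.
Proof.
rewrite sum_nat_blocks.
have -> : \sum_(0 <= a < b) \sum_(0 <= M < B) (B - legendre b (a * B + M))
        = \sum_(0 <= a < b) \sum_(0 <= M < B) (B - (a * q + legendre b M)).
  apply: eq_big_nat => a /andP[_ lt_a]; apply: eq_big_nat => M /andP[_ lt_M].
  by rewrite legendre_blockD.
have := big_nat_recr d 0
  (fun a => \sum_(0 <= M < B) (B - (a * q + legendre b M))) (leq0n d).
rewrite prednK // => ->; rewrite sum_top_block addnAC; congr (_ + _).
have -> : d * A = \sum_(0 <= a < d) A by rewrite sum_nat_const_nat subn0.
have -> : d * B * B = \sum_(0 <= a < d) B * B by rewrite sum_nat_const_nat subn0 mulnA.
rewrite big_distrr -!big_split /=; apply: eq_big_nat => a /andP[_ lt_a].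
by rewrite -(sum_low_block a lt_a) [q * B * a]mulnC mulnA.
Qed.

Lemma double_size_gaps : 2 * size gaps = 2 * b + d * B * B + (d * n).-1 * B.
Proof.
have le_d : d <= b * m by apply: leq_trans (leq_pred b) (leq_pmulr _ _).
rewrite size_gaps (@big_cat_nat _ _ _ d) //= sum_gaps_head.
have := sum_gaps_tail; have := sum_sub_legendre; have := sum_legendre_expn b_gt1 n.
have def_d : d = d./2.*2.+1 by rewrite -[d in LHS]odd_double_half d_odd.
have -> : \sum_(0 <= N < d) N = d * d./2.
  by rewrite bin2_sum bin2odd //; congr (_ * _); rewrite {1}def_d /= doubleK.
have def_b : b = d.+1 by rewrite prednK.
have : 0 < d * n by rewrite muln_gt0 d_gt0.
rewrite -[(d * n).-1]subn1.
move: (\sum_(d <= N < b * m) _) (\sum_(0 <= N < b * B) _) A def_B def_b def_d.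
move: b d d./2 B q => b' d' e B' q' tail full A' <- -> ->.
rewrite -!mul2n; nia.
Qed.

End GapsOfSCplus.

Theorem mainTheorem18 (b n : nat) :
  2 <= b -> ~~ odd b -> 2 <= n ->
  genus_SCplus b n
    (b + (b ^ (2 * n) * (b - 1) + b ^ n * (b * n - n - 1)) %/ 2).
Proof.
move=> b_gt1 b_even n_ge2; have n_gt0 : 0 < n := ltnW n_ge2.
exists (gaps b n); split; [exact: uniq_gaps | exact: mem_gaps |].
have := double_size_gaps b n b_gt1 b_even n_gt0.
have -> : b ^ (2 * n) = b ^ n * b ^ n by rewrite mul2n -addnn expnD.
have -> : b * n - n - 1 = (b.-1 * n).-1 by rewrite -!subn1 mulnBl mul1n.
rewrite subn1; move: (size _) (b ^ n) ((b.-1 * n).-1) => s B k double_s.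
have -> : B * B * b.-1 + B * k = (s - b) * 2 by nia.
by rewrite mulnK //; nia.
Qed.
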